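(* Let $K$ be a field of characteristic $0$, $\theta=t\frac{d}{dt}$, $\mathcal{L}=\theta^n+\sum_{i=0}^{n-1}a_i\theta^i$ with $a_i\in K(t)$, and $\mathcal{M}_{\mathcal{L}}=K(t)[\theta]/K(t)[\theta]\mathcal{L}$ with generator $\eta$ and $\eta^{(i)}=\theta^i\eta$. Let $\langle\,,\rangle$ be a $K(t)$-bilinear horizontal pairing $\mathcal{M}_{\mathcal{L}}\times\mathcal{M}_{\mathcal{L}}\to K(t)$ such that $\langle\eta,\eta^{(i)}\rangle=0$ for $0\le i<n-1$, and put $\gamma=\langle\eta,\eta^{(n-1)}\rangle$. Then: (i) the pairing is uniquely determined by $\gamma$, and $\gamma=c\beta^{-1}$ for some $c\in K$, where $\beta$ is a $\beta$-factor of $\mathcal{L}$; (ii) the pairing is $(-1)^{n+1}$-symmetric; (iii) if $\gamma\neq0$ the pairing is a polarization.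
   Context: Horizontal means $\theta\langle x,y\rangle=\langle\theta x,y\rangle+\langle x,\theta y\rangle$. A $\beta$-factor of $\mathcal{L}$ is a non-zero solution (in some differential field extension of $K(t)$) of $n\,\theta\beta=2a_{n-1}\beta$. $\operatorname{Fil}^i$ is the $K(t)$-span of $\eta^{(j)}$, $0\le j\le n-1-i$; a polarization is a $K(t)$-bilinear, $(-1)^{n+1}$-symmetric, non-degenerate horizontal pairing with $\langle\operatorname{Fil}^i,\operatorname{Fil}^{n-i}\rangle=0$ for $0\le i\le n-1$. *)

From HB Require Import structures.
From mathcomp Require Import all_boot all_order all_algebra.
From mathcomp Require Import generic_quotient fraction.
Set Implicit Arguments. Unset Strict Implicit. Unset Printing Implicit Defensive.
Import Order.TTheory GRing.Theory Num.Theory.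
Local Open Scope ring_scope.
Local Open Scope quotient_scope.

Notation Kt K := {fraction {poly K}}.

Notation tofracK x := (@FracField.tofrac _ x).

Definition constKt (K : fieldType) (c : K) : Kt K := tofracK (c%:P).

(* theta = t d/dt on K(t), computed on the canonical representative
   p/q of x:  theta (p/q) = t (p' q - p q') / q^2. *)
Definition thetaKt (K : fieldType) (x : Kt K) : Kt K :=
  let r := repr x in
  let p := \n_r in let q := \d_r in
  tofracK ('X * (p^`() * q - p * q^`())) / tofracK (q ^+ 2).

(* The module M_L = K(t)[theta]/K(t)[theta] L, with
   L = theta^n + sum_{i<n} a_i theta^i, modelled on its K(t)-basis
   eta^(0), ..., eta^(n-1): an element sum_j x_j eta^(j) is the row x.
   The coefficients a_i (i < n) are given by a : nat -> K(t); values a i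
   for i >= n are irrelevant. *)
Section Module.
Variables (K : fieldType) (n : nat) (a : nat -> Kt K).

(* coordinate x_{n-1} (0 if n = 0) *)
Definition lastc (x : 'rV[Kt K]_n) : Kt K := \sum_(i < n | i.+1 == n) x 0 i.

(* the action of theta on M_L:
   theta (sum_j x_j eta^(j)) = sum_j theta(x_j) eta^(j) + sum_j x_j eta^(j+1),
   with eta^(n) = - sum_{i<n} a_i eta^(i). *)
Definition thetaM (x : 'rV[Kt K]_n) : 'rV[Kt K]_n :=
  \row_(j < n) (thetaKt (x 0 j) + (\sum_(i < n | i.+1 == j) x 0 i)
                - lastc x * a j).

Definition etaM : 'rV[Kt K]_n := \row_(j < n) (j == 0%N :> nat)%:R.

Definition etaD (i : nat) : 'rV[Kt K]_n := iter i thetaM etaM.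

Definition inFil (i : nat) (x : 'rV[Kt K]_n) : Prop :=
  exists f : nat -> Kt K, x = \sum_(j < n - i) f j *: etaD j.

Definition bilinear (B : 'rV[Kt K]_n -> 'rV[Kt K]_n -> Kt K) : Prop :=
  (forall (c : Kt K) x x' y, B (c *: x + x') y = c * B x y + B x' y) /\
  (forall (c : Kt K) x y y', B x (c *: y + y') = c * B x y + B x y').

Definition horizontal (B : 'rV[Kt K]_n -> 'rV[Kt K]_n -> Kt K) : Prop :=
  forall x y, thetaKt (B x y) = B (thetaM x) y + B x (thetaM y).

Definition admissible_pairing (B : 'rV[Kt K]_n -> 'rV[Kt K]_n -> Kt K) :=
  [/\ bilinear B, horizontal B &
      forall i : nat, (i < n.-1)%N -> B etaM (etaD i) = 0].

Definition eps_symmetric (B : 'rV[Kt K]_n -> 'rV[Kt K]_n -> Kt K) : Prop :=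
  forall x y, B x y = (-1) ^+ n.+1 * B y x.

Definition nondegenerate (B : 'rV[Kt K]_n -> 'rV[Kt K]_n -> Kt K) : Prop :=
  (forall x, (forall y, B x y = 0) -> x = 0) /\
  (forall y, (forall x, B x y = 0) -> y = 0).

Definition polarization (B : 'rV[Kt K]_n -> 'rV[Kt K]_n -> Kt K) : Prop :=
  [/\ bilinear B, eps_symmetric B, nondegenerate B, horizontal B &
      forall i : nat, (i <= n.-1)%N ->
        forall x y, inFil i x -> inFil (n - i) y -> B x y = 0].

End Module.

Definition diff_ext (K : fieldType) (E : fieldType) (d : E -> E)
  (iota : {rmorphism Kt K -> E}) : Prop :=
  [/\ forall x y, d (x + y) = d x + d y,
      forall x y, d (x * y) = d x * y + x * d y &
      forall x, d (iota x) = iota (thetaKt x)].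

Definition beta_factor (K : fieldType) (n : nat) (a : nat -> Kt K)
  (E : fieldType) (d : E -> E) (iota : {rmorphism Kt K -> E}) (b : E) :=
  b != 0 /\ n%:R * d b = 2%:R * iota (a n.-1) * b.

(* Horizontality, read as <theta x, y> = theta <x, y> - <x, theta y>, propagates
   the vanishing of <eta, eta^(i)> (i < n-1): <eta^(i), eta^(j)> is 0 for
   i + j < n-1 and (-1)^i gamma for i + j = n-1.  The same recursion computes
   every entry <eta^(i), e_j> from the row i = 0, so gamma determines the
   pairing; applied to (x, y) |-> (-1)^(n+1) <y, x> this gives the symmetry.
   Telescoping horizontality along the antidiagonal i + j = n and using
   eta^(n) = - sum a_k eta^(k) gives n theta gamma = - 2 a_(n-1) gamma, so
   gamma beta is a constant.  Finally the Gram matrix in the basis eta^(i) is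
   zero above the antidiagonal and +-gamma on it, which gives both the
   nondegeneracy and the orthogonality of the filtration. *)

From Pilot Require Import Defs.
From HB Require Import structures.
From mathcomp Require Import all_boot all_order all_algebra.
From mathcomp Require Import generic_quotient fraction.
From mathcomp Require Import ring zify.
Set Implicit Arguments.
Unset Strict Implicit.
Unset Printing Implicit Defensive.
Import GRing.Theory.
Local Open Scope ring_scope.

Local Notation "x %:F" := (@FracField.tofrac _ x).

Section Fractions.
Variable R : idomainType.

Lemma frac_numden (x : {fraction R}) : x = (\n_(repr x))%:F / (\d_(repr x))%:F.
Proof.
have d0 : (\d_(repr x))%:F != 0 by rewrite tofrac_eq0 denom_ratioP.
apply: (mulIf d0); rewrite divfK // -[x in x * _]reprK.
unlock FracField.tofrac.
transitivity (\pi_{fraction R}%qT (FracField.mulf (repr x) (Ratio \d_(repr x) 1))).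
  by rewrite FracField.pi_mul.
apply/eqmodP; rewrite /= FracField.equivfE /FracField.mulf.
by rewrite !numden_Ratio ?mulf_neq0 ?denom_ratioP ?oner_neq0 // !mulr1 mulrC.
Qed.

Lemma eq_frac (p q p' q' : R) : q != 0 -> q' != 0 ->
  (p%:F / q%:F == p'%:F / q'%:F) = (p * q' == p' * q).
Proof. by move=> q0 q'0; rewrite eqr_div ?tofrac_eq0 // -!tofracM tofrac_eq. Qed.

End Fractions.

Section Theta.
Variable K : fieldType.

Lemma thetaKt_frac (p q : {poly K}) : q != 0 ->
  thetaKt (p%:F / q%:F) = ('X * (p^`() * q - p * q^`()))%:F / (q ^+ 2)%:F.
Proof.
move=> q0; rewrite /thetaKt.
set x := p%:F / q%:F; set p' := \n_(repr x); set q' := \d_(repr x).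
have q'0 : q' != 0 by apply: denom_ratioP.
have cross : p' * q - p * q' = 0.
  by apply/eqP; rewrite subr_eq0 -eq_frac // -frac_numden.
have cross' : p'^`() * q + p' * q^`() - (p^`() * q' + p * q'^`()) = 0.
  by rewrite -!derivM -derivB cross deriv0.
apply/eqP; rewrite eq_frac ?expf_neq0 //; apply/eqP/subr0_eq.
transitivity ('X * (q' * q * (p'^`() * q + p' * q^`() - (p^`() * q' + p * q'^`()))
                   - (q'^`() * q + q^`() * q') * (p' * q - p * q'))); first by ring.
by rewrite cross cross' !mulr0 subrr mulr0.
Qed.

Lemma thetaKt_const (c : K) : thetaKt (constKt c) = 0.
Proof.
rewrite /constKt -[_%:F]divr1 -tofrac1 -polyC1 thetaKt_frac ?polyC_eq0 ?oner_neq0 //.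
by rewrite !derivC !(mul0r, mulr0, subrr).
Qed.

Lemma thetaKt_natr (k : nat) : thetaKt (k%:R : Kt K) = 0.
Proof. by rewrite -(thetaKt_const k%:R) /constKt polyC_natr rmorph_nat. Qed.

Lemma thetaKt0 : thetaKt (0 : Kt K) = 0.
Proof. exact: thetaKt_natr 0. Qed.

Lemma thetaKtN (x : Kt K) : thetaKt (- x) = - thetaKt x.
Proof.
rewrite (frac_numden x); move: (denom_ratioP (repr x)).
move: (\n_ _) (\d_ _) => p q q0.
rewrite -mulNr -tofracN !thetaKt_frac // derivN -[RHS]mulNr -tofracN.
by congr (FracField.tofrac _ / _); ring.
Qed.

Lemma thetaKt_sign (k : nat) (x : Kt K) :
  thetaKt ((-1) ^+ k * x) = (-1) ^+ k * thetaKt x.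
Proof. by rewrite -signr_odd !mulr_sign; case: odd => //; apply: thetaKtN. Qed.

End Theta.

Lemma sum_delta_cond (R : pzSemiRingType) (n : nat) (P : pred 'I_n) (i : 'I_n) :
  \sum_(k < n | P k) (k == i)%:R = (P i)%:R :> R.
Proof.
rewrite big_mkcond (bigD1 i) //= eqxx big1 ?addr0; first by case: (P i).
by move=> k /negbTE ->; case: (P k).
Qed.

Lemma sum_ord_last (R : nmodType) (n : nat) (F : nat -> R) : (0 < n)%N ->
  (forall k, (k < n.-1)%N -> F k = 0) -> \sum_(k < n) F k = F n.-1.
Proof.
by case: n => // m _ F0; rewrite big_ord_recr /= big1 ?add0r // => k _; apply: F0.
Qed.

Section Module.
Variables (K : fieldType) (n : nat) (a : nat -> Kt K).

Lemma thetaM_delta (i : 'I_n) :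
  thetaM a (delta_mx 0 i) = \row_k ((k == i.+1 :> nat)%:R - (i.+1 == n)%:R * a k).
Proof.
apply/rowP => k; rewrite !mxE thetaKt_natr add0r /lastc.
under eq_bigr do rewrite mxE /=.
under [X in _ - X * _]eq_bigr do rewrite mxE /=.
by rewrite !sum_delta_cond /= eq_sym.
Qed.

Lemma etaD_delta (i : 'I_n) : etaD n a i = delta_mx 0 i.
Proof.
case: i => i; elim: i => [|i IH] lt_in.
  by apply/rowP => k; rewrite !mxE.
rewrite /etaD iterS -/(etaD n a i) (IH (ltnW lt_in)) thetaM_delta.
rewrite (ltn_eqF lt_in); apply/rowP => k.
by rewrite !mxE mul0r subr0.
Qed.

Lemma etaD_order (n_gt0 : (0 < n)%N) :
  etaD n a n = \sum_(k < n) (- a k) *: etaD n a k.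
Proof.
have lt_n1n : (n.-1 < n)%N by rewrite ltn_predL.
have -> : etaD n a n = thetaM a (etaD n a n.-1).
  by rewrite -[X in etaD n a X](prednK n_gt0).
rewrite (etaD_delta (Ordinal lt_n1n)) thetaM_delta /= prednK // eqxx.
rewrite [LHS]row_sum_delta; apply: eq_bigr => k _.
by rewrite etaD_delta !mxE (ltn_eqF (ltn_ord k)) mul1r sub0r.
Qed.

End Module.

Section Pairing.
Variables (K : fieldType) (n : nat) (a : nat -> Kt K).
Variable B : 'rV[Kt K]_n -> 'rV[Kt K]_n -> Kt K.

Section Bilinear.
Hypothesis B_bilinear : Defs.bilinear B.

Lemma pairDl x x' y : B (x + x') y = B x y + B x' y.
Proof. by have := B_bilinear.1 1 x x' y; rewrite scale1r mul1r. Qed.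

Lemma pairDr x y y' : B x (y + y') = B x y + B x y'.
Proof. by have := B_bilinear.2 1 x y y'; rewrite scale1r mul1r. Qed.

Lemma pair0l y : B 0 y = 0.
Proof. by apply: (addrI (B 0 y)); rewrite -pairDl !addr0. Qed.

Lemma pair0r x : B x 0 = 0.
Proof. by apply: (addrI (B x 0)); rewrite -pairDr !addr0. Qed.

Lemma pairZl c x y : B (c *: x) y = c * B x y.
Proof. by have := B_bilinear.1 c x 0 y; rewrite addr0 pair0l addr0. Qed.

Lemma pairZr c x y : B x (c *: y) = c * B x y.
Proof. by have := B_bilinear.2 c x y 0; rewrite addr0 pair0r addr0. Qed.

Lemma pair_sumZl (I : Type) (r : seq I) (P : pred I) c (u : I -> 'rV_n) y :
  B (\sum_(i <- r | P i) c i *: u i) y = \sum_(i <- r | P i) c i * B (u i) y.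
Proof.
by elim/big_rec2: _ => [|i s t _ <-]; rewrite ?pair0l // pairDl pairZl.
Qed.

Lemma pair_sumZr (I : Type) (r : seq I) (P : pred I) c (u : I -> 'rV_n) x :
  B x (\sum_(i <- r | P i) c i *: u i) = \sum_(i <- r | P i) c i * B x (u i).
Proof.
by elim/big_rec2: _ => [|i s t _ <-]; rewrite ?pair0r // pairDr pairZr.
Qed.

Lemma pair_coordl x y : B x y = \sum_(i < n) x 0 i * B (delta_mx 0 i) y.
Proof. by rewrite {1}[x]row_sum_delta pair_sumZl. Qed.

Lemma pair_coordr x y : B x y = \sum_(j < n) y 0 j * B x (delta_mx 0 j).
Proof. by rewrite {1}[y]row_sum_delta pair_sumZr. Qed.

End Bilinear.

Section Horizontal.
Hypotheses (B_bilinear : Defs.bilinear B) (B_horizontal : horizontal a B).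
Hypothesis B_eta_etaD : forall i, (i < n.-1)%N -> B (etaM K n) (etaD n a i) = 0.
Local Notation gamma := (B (etaM K n) (etaD n a n.-1)).

Lemma pair_thetaMl x y : B (thetaM a x) y = thetaKt (B x y) - B x (thetaM a y).
Proof. by rewrite B_horizontal addrK. Qed.

Lemma pair_etaD i j : (i + j <= n.-1)%N ->
  B (etaD n a i) (etaD n a j) = (i + j == n.-1)%N%:R * ((-1) ^+ i * gamma).
Proof.
elim: i j => [|i IH] j le_ijn.
  move: le_ijn; rewrite !add0n expr0 mul1r leq_eqVlt => /orP[/eqP->|lt_jn].
    by rewrite eqxx mul1r.
  by rewrite [LHS]B_eta_etaD // (ltn_eqF lt_jn) mul0r.
have le_ij : (i + j <= n.-1)%N by apply: leq_trans le_ijn; rewrite leq_add2r.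
rewrite [etaD n a i.+1]/etaD iterS -/(etaD n a i) pair_thetaMl.
change (thetaM a (etaD n a j)) with (etaD n a j.+1).
rewrite !IH -?addSnnS // (ltn_eqF le_ijn) mul0r thetaKt0 sub0r.
by rewrite exprS mulN1r mulNr mulrN.
Qed.

Lemma pair_etaD_lt i j : (i + j < n.-1)%N -> B (etaD n a i) (etaD n a j) = 0.
Proof. by move=> lt_ijn; rewrite pair_etaD ?(ltn_eqF lt_ijn) ?mul0r // ltnW. Qed.

Lemma pair_etaD_eq i j : (i + j = n.-1)%N ->
  B (etaD n a i) (etaD n a j) = (-1) ^+ i * gamma.
Proof. by move=> e_ijn; rewrite pair_etaD e_ijn ?eqxx ?mul1r. Qed.

Lemma pair_etaD_telescope i : (i <= n)%N ->
  (-1) ^+ i * B (etaD n a i) (etaD n a (n - i)) =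
  B (etaM K n) (etaD n a n) - i%:R * thetaKt gamma.
Proof.
elim: i => [|i IH] le_in; first by rewrite subn0 expr0 !mul1r mul0r subr0.
have step : (-1) ^+ i * thetaKt gamma =
    B (etaD n a i.+1) (etaD n a (n - i.+1)) + B (etaD n a i) (etaD n a (n - i)).
  rewrite -thetaKt_sign -(@pair_etaD_eq i (n.-1 - i)); last by lia.
  have -> : (n - i.+1 = n.-1 - i)%N by lia.
  by have -> : (n - i = (n.-1 - i).+1)%N by lia.
have -> : B (etaD n a i.+1) (etaD n a (n - i.+1)) =
    (-1) ^+ i * thetaKt gamma - B (etaD n a i) (etaD n a (n - i)) by rewrite step addrK.
rewrite exprS mulN1r mulNr mulrBr mulrA -expr2 sqrr_sign mul1r (IH (ltnW le_in)).
by rewrite -addn1 natrD; ring.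
Qed.

Lemma pair_Fil i x y : inFil a i x -> inFil a (n - i) y -> B x y = 0.
Proof.
move=> [f ->] [g ->]; rewrite pair_sumZl // big1 // => j _.
rewrite pair_sumZr // big1 ?mulr0 // => k _.
by rewrite pair_etaD_lt ?mulr0 //; move: (ltn_ord j) (ltn_ord k); lia.
Qed.

Lemma pair_nondegl : gamma != 0 -> forall x, (forall y, B x y = 0) -> x = 0.
Proof.
move=> gamma_neq0 x Bx0.
(* pairing with eta^(n-1-j) isolates the coordinate x_j, given x_k = 0 for k > j *)
suff xj0 m (j : 'I_n) : (n.-1 - j < m)%N -> x 0 j = 0.
  by apply/rowP => j; rewrite mxE (xj0 (n.-1 - j).+1).
elim: m j => [//|m IH] j lt_jm.
have := Bx0 (etaD n a (n.-1 - j)).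
rewrite pair_coordl // (bigD1 j) //= big1 ?addr0.
  rewrite -(etaD_delta a j) pair_etaD_eq; last by move: (ltn_ord j); lia.
  by move/eqP; rewrite !mulf_eq0 signr_eq0 (negbTE gamma_neq0) !orbF => /eqP.
move=> k k_neq_j; rewrite -(etaD_delta a k).
have [lt_kj|lt_jk] := ltnP k j.
  by rewrite pair_etaD_lt ?mulr0 //; move: (ltn_ord j); lia.
have k_neq_j' : (k : nat) != j := k_neq_j.
by rewrite IH ?mul0r //; move: (ltn_ord k); lia.
Qed.

Hypothesis n_gt0 : (0 < n)%N.

Lemma pair_eta_etaD_order : B (etaM K n) (etaD n a n) = - (a n.-1 * gamma).
Proof.
rewrite etaD_order // pair_sumZr //.
rewrite (@sum_ord_last _ _ (fun k => - a k * B (etaM K n) (etaD n a k))) ?mulNr //.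
by move=> k lt_kn; rewrite B_eta_etaD ?mulr0.
Qed.

Lemma pair_etaD_order_eta :
  B (etaD n a n) (etaM K n) = - (a n.-1 * ((-1) ^+ n.-1 * gamma)).
Proof.
rewrite etaD_order // pair_sumZl //.
rewrite (@sum_ord_last _ _ (fun k => - a k * B (etaD n a k) (etaM K n))) //.
  by rewrite (@pair_etaD_eq n.-1 0) ?addn0 // mulNr.
by move=> k lt_kn; rewrite (@pair_etaD_lt k 0) ?addn0 ?mulr0.
Qed.

Lemma theta_gamma : n%:R * thetaKt gamma = - (2%:R * a n.-1 * gamma).
Proof.
have := pair_etaD_telescope (leqnn n).
rewrite subnn pair_etaD_order_eta pair_eta_etaD_order.
have -> : (-1) ^+ n = - (-1) ^+ n.-1 :> Kt K.
  by rewrite -[in LHS](prednK n_gt0) exprS mulN1r.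
set s := (-1) ^+ n.-1 => h.
have -> : n%:R * thetaKt gamma = - (a n.-1 * gamma) - - s * - (a n.-1 * (s * gamma)).
  by rewrite h; ring.
transitivity (- (a n.-1 * gamma) - s ^+ 2 * (a n.-1 * gamma)); first by ring.
by rewrite sqrr_sign; ring.
Qed.

End Horizontal.
End Pairing.

Section Uniqueness.
Variables (K : fieldType) (n : nat) (a : nat -> Kt K).
Implicit Type B : 'rV[Kt K]_n -> 'rV[Kt K]_n -> Kt K.

Lemma admissible_pairing_unique B B' :
  admissible_pairing a B -> admissible_pairing a B' ->
  B' (etaM K n) (etaD n a n.-1) = B (etaM K n) (etaD n a n.-1) -> B' =2 B.
Proof.
case=> bilB horB vanB [bilB' horB' vanB'] eq_gamma.
have agree i : (i < n)%N -> forall j : 'I_n,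
    B' (etaD n a i) (delta_mx 0 j) = B (etaD n a i) (delta_mx 0 j).
  elim: i => [|i IH] lt_in j.
    rewrite -(etaD_delta a j); have [lt_jn|ge_jn] := ltnP j n.-1.
      by rewrite [LHS]vanB' // [RHS]vanB.
    by have -> : (j : nat) = n.-1 by move: (ltn_ord j); lia.
  change (etaD n a i.+1) with (thetaM a (etaD n a i)).
  rewrite (pair_thetaMl horB) (pair_thetaMl horB') (IH (ltnW lt_in)).
  congr (_ - _); rewrite (pair_coordr bilB) (pair_coordr bilB').
  by apply: eq_bigr => k _; rewrite IH // ltnW.
move=> x y; rewrite (pair_coordl bilB') (pair_coordl bilB); apply: eq_bigr => i _.
rewrite (pair_coordr bilB') (pair_coordr bilB); congr (_ * _).
by apply: eq_bigr => j _; rewrite -(etaD_delta a i) agree.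
Qed.

Lemma admissible_pairing_sym B : (0 < n)%N -> admissible_pairing a B -> eps_symmetric B.
Proof.
move=> n_gt0 hB; have [bilB horB vanB] := hB.
pose B' x y := (-1) ^+ n.+1 * B y x.
have hB' : admissible_pairing a B'.
  split.
  - by split=> c x x' y; rewrite /B' (bilB.1, bilB.2) mulrDr mulrCA.
  - by move=> x y; rewrite /B' thetaKt_sign horB mulrDr addrC.
  - by move=> i lt_in; rewrite /B' (@pair_etaD_lt _ _ _ _ horB vanB i 0) ?mulr0 ?addn0.
have sgn : (-1) ^+ n.+1 = (-1) ^+ n.-1 :> Kt K.
  by rewrite -[in LHS](prednK n_gt0) !exprS !mulN1r opprK.
have eq_gamma : B' (etaM K n) (etaD n a n.-1) = B (etaM K n) (etaD n a n.-1).
  rewrite /B' (@pair_etaD_eq _ _ _ _ horB vanB n.-1 0) ?addn0 //.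
  by rewrite mulrA sgn -expr2 sqrr_sign mul1r.
by move=> x y; rewrite -(admissible_pairing_unique hB hB' eq_gamma x y).
Qed.

End Uniqueness.

Lemma Kt_natr_eq0 (K : fieldType) : [pchar K] =i pred0 ->
  forall m, ((m%:R : Kt K) == 0) = (m == 0%N).
Proof.
move=> charK0 m; rewrite -(rmorph_nat (@FracField.tofrac _)) tofrac_eq0.
by rewrite -polyC_natr polyC_eq0 ((pcharf0P _).1 charK0).
Qed.

Lemma d_mul_beta_factor_eq0 (K : fieldType) (n : nat) (a : nat -> Kt K)
    (E : fieldType) (d : E -> E) (iota : {rmorphism Kt K -> E}) (g : Kt K) (b : E) :
  diff_ext d iota -> (n%:R : Kt K) != 0 ->
  n%:R * thetaKt g = - (2%:R * a n.-1 * g) -> beta_factor n a d iota b ->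
  d (iota g * b) = 0.
Proof.
move=> [_ dM d_iota] n_neq0 theta_g [_ theta_b].
have nE_neq0 : (n%:R : E) != 0 by rewrite -(rmorph_nat iota) fmorph_eq0.
apply: (mulfI nE_neq0); rewrite mulr0 dM d_iota mulrDr mulrA -(rmorph_nat iota).
by rewrite -rmorphM theta_g rmorph_nat mulrCA theta_b rmorphN !rmorphM !rmorph_nat; ring.
Qed.

Theorem lemma1p3 (K : fieldType) (charK0 : [pchar K] =i pred0)
  (n : nat) (hn : (0 < n)%N) (a : nat -> {fraction {poly K}})
  (B : 'rV[{fraction {poly K}}]_n -> 'rV[{fraction {poly K}}]_n ->
       {fraction {poly K}})
  (hB : admissible_pairing a B) :
  let gamma := B (etaM K n) (etaD n a n.-1) in
  (* (i) uniqueness given gamma *)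
  [/\ (forall B' : 'rV[{fraction {poly K}}]_n -> 'rV[{fraction {poly K}}]_n ->
           {fraction {poly K}},
         admissible_pairing a B' -> B' (etaM K n) (etaD n a n.-1) = gamma ->
         forall x y, B' x y = B x y),
      (* (i) gamma = c beta^-1 for a beta-factor beta (in any differential
         field extension with field of constants K) *)
      (forall (E : fieldType) (d : E -> E)
              (iota : {rmorphism {fraction {poly K}} -> E}),
         diff_ext d iota ->
         (forall e : E, d e = 0 -> exists c : K, e = iota (constKt c)) ->
         forall b : E, beta_factor n a d iota b ->
         exists c : K, iota gamma = iota (constKt c) * b^-1),
      (* (ii) *)
      eps_symmetric B &
      (* (iii) *)
      gamma != 0 -> polarization a B].
Proof.
move=> gamma; have [bilB horB vanB] := hB.
have symB := admissible_pairing_sym hn hB.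
split=> //.
- by move=> B' hB'; apply: admissible_pairing_unique.
- move=> E d iota diota const b beta_b.
  have n_neq0 : (n%:R : Kt K) != 0 by rewrite Kt_natr_eq0 // -lt0n.
  have theta_g := theta_gamma bilB horB vanB hn.
  have [c gamma_b] := const _ (d_mul_beta_factor_eq0 diota n_neq0 theta_g beta_b).
  by exists c; rewrite -gamma_b mulfK //; case: beta_b.
- move=> gamma_neq0; split=> //; last by move=> i _ x y; apply: pair_Fil.
  split; first exact: pair_nondegl.
  move=> y By0; apply: (pair_nondegl bilB horB vanB gamma_neq0) => x.
  by rewrite symB By0 mulr0.
Qed.
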